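(* For all $n\ge0$, $\ell\ge1$ and every $\varphi\in\mathcal{B}\Sigma_{n,\ell}$, there exists a formula $\varphi'\in\mathrm{FOC}(\{\mathsf{P}_\exists\})$ equivalent to $\varphi$ such that $\mathrm{free}(\varphi')=\mathrm{free}(\varphi)$, $\mathrm{bw}(\varphi')\le\ell$ and $\mathrm{br}(\varphi')\le n$.
   Context: $\mathcal{B}\Sigma_{0,\ell}$ is the set of quantifier-free first-order formulas; a formula belongs to $\mathcal{B}\Sigma_{n+1,\ell}$ if it is a Boolean combination of formulas $\exists x_1\cdots\exists x_k\,\psi$ with $k\le\ell$ and $\psi\in\mathcal{B}\Sigma_{n,\ell}$. $\mathsf{P}_\exists$ is a unary numerical predicate with semantics $\{1,2,3,\dots\}$. The logic $\mathrm{FOC}(\{\mathsf{P}_\exists\})$ consists of formulas and counting terms built by: atomic first-order formulas; $\neg$, $\vee$; $\exists y$ for (structure) variables $y$; $\mathsf{P}_\exists(t)$ for a counting term $t$, true iff the value of $t$ is $\ge1$; counting terms $\#\bar y.\varphi$ for a tuple $\bar y$ of $\ge1$ pairwise distinct variables, with value the number of tuples of elements satisfying $\varphi$ for $\bar y$; integers; $(t_1+t_2)$, $(t_1\cdot t_2)$. Two formulas are equivalent if they agree in all (finite) structures under all assignments. $\mathrm{br}$ is the maximal nesting depth of constructs $\exists y$ and $\#\bar y$; $\mathrm{bw}$ is the maximal $|\bar y|$ over counting terms $\#\bar y.\psi$ occurring, and if none occurs, $1$ if some $\exists y$ occurs and $0$ otherwise. *)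

From mathcomp Require Import all_boot all_order all_algebra.
Set Implicit Arguments. Unset Strict Implicit. Unset Printing Implicit Defensive.

Local Open Scope ring_scope.

Section Logic.
Variables (Sym : Type) (ar : Sym -> nat).

Definition var := nat.

Inductive fo : Type :=
| FEq  : var -> var -> fo
| FRel : forall s : Sym, (ar s).-tuple var -> fo
| FNot : fo -> fo
| FOr  : fo -> fo -> fo
| FEx  : var -> fo -> fo.

Fixpoint qfree (f : fo) : bool :=
  match f with
  | FEq _ _ | FRel _ _ => true
  | FNot g => qfree g
  | FOr g h => qfree g && qfree h
  | FEx _ _ => false
  end.

Definition exs (xs : seq var) (psi : fo) : fo := foldr FEx psi xs.

Inductive BSigma (l : nat) : nat -> fo -> Prop :=
| BS0 f : qfree f -> BSigma l 0 f
| BSex n (xs : seq var) psi :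
    (size xs <= l)%N -> BSigma l n psi -> BSigma l n.+1 (exs xs psi)
| BSnot n f : BSigma l n.+1 f -> BSigma l n.+1 (FNot f)
| BSor n f g : BSigma l n.+1 f -> BSigma l n.+1 g -> BSigma l n.+1 (FOr f g).

Inductive foc : Type :=
| CEq  : var -> var -> foc
| CRel : forall s : Sym, (ar s).-tuple var -> foc
| CNot : foc -> foc
| COr  : foc -> foc -> foc
| CEx  : var -> foc -> foc
| CPex : cterm -> foc
with cterm : Type :=
| TCount : seq var -> foc -> cterm
| TInt   : int -> cterm
| TAdd   : cterm -> cterm -> cterm
| TMul   : cterm -> cterm -> cterm.

Fixpoint wf_foc (f : foc) : bool :=
  match f with
  | CEq _ _ | CRel _ _ => true
  | CNot g => wf_foc g
  | COr g h => wf_foc g && wf_foc h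
  | CEx _ g => wf_foc g
  | CPex t => wf_ct t
  end
with wf_ct (t : cterm) : bool :=
  match t with
  | TCount ys g => [&& (0 < size ys)%N, uniq ys & wf_foc g]
  | TInt _ => true
  | TAdd t1 t2 | TMul t1 t2 => wf_ct t1 && wf_ct t2
  end.

Fixpoint free_fo (f : fo) : seq var :=
  match f with
  | FEq x y => [:: x; y]
  | FRel _ vs => tval vs
  | FNot g => free_fo g
  | FOr g h => free_fo g ++ free_fo h
  | FEx x g => [seq v <- free_fo g | v != x]
  end.

Fixpoint free_foc (f : foc) : seq var :=
  match f with
  | CEq x y => [:: x; y]
  | CRel _ vs => tval vs
  | CNot g => free_foc g
  | COr g h => free_foc g ++ free_foc h
  | CEx x g => [seq v <- free_foc g | v != x]
  | CPex t => free_ct t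
  end
with free_ct (t : cterm) : seq var :=
  match t with
  | TCount ys g => [seq v <- free_foc g | v \notin ys]
  | TInt _ => [::]
  | TAdd t1 t2 | TMul t1 t2 => free_ct t1 ++ free_ct t2
  end.

Fixpoint br (f : foc) : nat :=
  match f with
  | CEq _ _ | CRel _ _ => 0
  | CNot g => br g
  | COr g h => maxn (br g) (br h)
  | CEx _ g => (br g).+1
  | CPex t => br_ct t
  end
with br_ct (t : cterm) : nat :=
  match t with
  | TCount _ g => (br g).+1
  | TInt _ => 0
  | TAdd t1 t2 | TMul t1 t2 => maxn (br_ct t1) (br_ct t2)
  end.

Fixpoint hascount (f : foc) : bool :=
  match f with
  | CEq _ _ | CRel _ _ => false
  | CNot g => hascount g
  | COr g h => hascount g || hascount h
  | CEx _ g => hascount g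
  | CPex t => hascount_ct t
  end
with hascount_ct (t : cterm) : bool :=
  match t with
  | TCount _ _ => true
  | TInt _ => false
  | TAdd t1 t2 | TMul t1 t2 => hascount_ct t1 || hascount_ct t2
  end.

Fixpoint hasex (f : foc) : bool :=
  match f with
  | CEq _ _ | CRel _ _ => false
  | CNot g => hasex g
  | COr g h => hasex g || hasex h
  | CEx _ _ => true
  | CPex t => hasex_ct t
  end
with hasex_ct (t : cterm) : bool :=
  match t with
  | TCount _ g => hasex g
  | TInt _ => false
  | TAdd t1 t2 | TMul t1 t2 => hasex_ct t1 || hasex_ct t2
  end.

Fixpoint maxcw (f : foc) : nat :=
  match f with
  | CEq _ _ | CRel _ _ => 0
  | CNot g => maxcw g
  | COr g h => maxn (maxcw g) (maxcw h)
  | CEx _ g => maxcw g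
  | CPex t => maxcw_ct t
  end
with maxcw_ct (t : cterm) : nat :=
  match t with
  | TCount ys g => maxn (size ys) (maxcw g)
  | TInt _ => 0
  | TAdd t1 t2 | TMul t1 t2 => maxn (maxcw_ct t1) (maxcw_ct t2)
  end.

Definition bw (f : foc) : nat :=
  if hascount f then maxcw f else if hasex f then 1%N else 0%N.

Record structure := Structure {
  carrier :> finType;
  interp : forall s : Sym, (ar s).-tuple carrier -> bool
}.

Section Semantics.
Variable M : structure.

Definition upd (a : var -> M) (x : var) (m : M) : var -> M :=
  fun v => if v == x then m else a v.

Fixpoint updl (a : var -> M) (ys : seq var) (ms : seq M) : var -> M :=
  match ys, ms with
  | y :: ys', m :: ms' => upd (updl a ys' ms') y m
  | _, _ => a
  end.

Fixpoint sat_fo (a : var -> M) (f : fo) : bool :=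
  match f with
  | FEq x y => a x == a y
  | FRel s vs => interp (map_tuple a vs)
  | FNot g => ~~ sat_fo a g
  | FOr g h => sat_fo a g || sat_fo a h
  | FEx x g => [exists m : M, sat_fo (upd a x m) g]
  end.

Fixpoint sat_foc (a : var -> M) (f : foc) : bool :=
  match f with
  | CEq x y => a x == a y
  | CRel s vs => interp (map_tuple a vs)
  | CNot g => ~~ sat_foc a g
  | COr g h => sat_foc a g || sat_foc a h
  | CEx x g => [exists m : M, sat_foc (upd a x m) g]
  | CPex t => (1 <= eval_ct a t)%R
  end
with eval_ct (a : var -> M) (t : cterm) : int :=
  match t with
  | TCount ys g =>
      (#|[pred ms : (size ys).-tuple M | sat_foc (updl a ys ms) g]|)%:Z
  | TInt z => z
  | TAdd t1 t2 => eval_ct a t1 + eval_ct a t2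
  | TMul t1 t2 => eval_ct a t1 * eval_ct a t2
  end.

End Semantics.

End Logic.

(* Each block [exists x1 ... xk, psi] of a BSigma_{n,l} formula is replaced by
   [P_exists(#(x1, ..., xk). psi')], where psi' translates psi and duplicates
   among the xi are removed: a block holds iff some assignment agreeing with
   the current one outside {x1, ..., xk} satisfies psi, iff the number of
   tuples witnessing psi' is positive.  Boolean connectives are kept, so
   every block costs exactly one level of counting depth and at most l
   counted variables, and no [exists] occurs in the translation. *)
From mathcomp Require Import all_boot all_order all_algebra.
Set Implicit Arguments. Unset Strict Implicit. Unset Printing Implicit Defensive.

Section Translation.
Variables (Sym : Type) (ar : Sym -> nat).

Section Assignments.
Variable M : structure ar.

Definition agree_off (xs : seq var) (a b : var -> M) :=
  forall v, v \notin xs -> b v = a v.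

Lemma eq_agree_off xs ys a b :
  xs =i ys -> agree_off xs a b -> agree_off ys a b.
Proof. by move=> eq_xs ab v; rewrite -eq_xs; apply: ab. Qed.

Lemma eq_sat_fo (f : fo ar) (a b : var -> M) :
  a =1 b -> sat_fo a f = sat_fo b f.
Proof.
elim: f a b => [x y|s vs|g IHg|g IHg h IHh|x g IHg] a b eq_ab /=.
- by rewrite !eq_ab.
- by congr (interp _); apply: val_inj; apply: eq_map.
- by rewrite (IHg a b).
- by rewrite (IHg a b) // (IHh a b).
- apply: eq_existsb => m; apply: IHg => v.
  by rewrite /upd; case: ifP.
Qed.

Lemma agree_off_updl (a : var -> M) ys ms : agree_off ys a (updl a ys ms).
Proof.
elim: ys ms => [|y ys IHys] [|m ms] //= v.
by rewrite in_cons negb_or /upd => /andP[/negbTE-> ?]; apply: IHys.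
Qed.

Lemma sat_exsP (xs : seq var) (psi : fo ar) (a : var -> M) :
  reflect (exists2 b, agree_off xs a b & sat_fo b psi)
          (sat_fo a (exs xs psi)).
Proof.
elim: xs a => [|x xs IHxs] a /=.
  apply: (iffP idP) => [psi_a|[b ab]]; first by exists a.
  by rewrite (@eq_sat_fo psi a b) // => v; rewrite ab.
apply: (iffP existsP) => [[m /IHxs[b upd_b psi_b]]|[b ab psi_b]].
  exists b => // v; rewrite in_cons negb_or => /andP[/negbTE x_v xs_v].
  by rewrite upd_b // /upd x_v.
exists (b x); apply/IHxs; exists b => // v xs_v.
rewrite /upd; case: eqP => [->|/eqP x_v] //.
by apply: ab; rewrite in_cons negb_or x_v.
Qed.

Lemma exists_updlP (ys : seq var) (P : (var -> M) -> Prop) (a : var -> M) :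
  (forall b c, b =1 c -> P b -> P c) ->
  (exists2 ms : seq M, size ms = size ys & P (updl a ys ms)) <->
  (exists2 b, agree_off ys a b & P b).
Proof.
elim: ys P => [|y ys IHys] P P_ext.
  split=> [[[|//] _ P_a]|[b ab P_b]]; first by exists a.
  by exists [::] => //; apply: P_ext P_b => v; rewrite ab.
split=> [[[|m ms] //= _ P_ms]|[b ab P_b]].
  by exists (upd (updl a ys ms) y m) => //; apply: (agree_off_updl _ (m :: ms)).
(* [updl] gives [y] priority over [ys]: fix [y] to [b y] and recurse on [ys]. *)
have P'_ext b1 b2 : b1 =1 b2 -> P (upd b1 y (b y)) -> P (upd b2 y (b y)).
  by move=> eq_b; apply: P_ext => v; rewrite /upd eq_b.
have [|ms size_ms P_ms] := proj2 (IHys _ P'_ext).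
  exists (upd b y (a y)).
    move=> v ys_v; rewrite /upd; case: eqP => [->|/eqP y_v] //.
    by apply: ab; rewrite in_cons negb_or y_v.
  by apply: P_ext P_b => v; rewrite /upd; case: eqP => [->|].
by exists (b y :: ms); rewrite //= size_ms.
Qed.

End Assignments.

Lemma mem_free_exs xs (psi : fo ar) v :
  (v \in free_fo (exs xs psi)) = (v \in free_fo psi) && (v \notin xs).
Proof.
elim: xs => [|x xs IHxs] /=; first by rewrite andbT.
by rewrite mem_filter IHxs in_cons negb_or andbCA andbA.
Qed.

Lemma bw_le_maxcw (f : foc ar) : ~~ hasex f -> (bw f <= maxcw f)%N.
Proof. by rewrite /bw => /negbTE->; case: ifP. Qed.

Record is_translation (n l : nat) (phi : fo ar) (phi' : foc ar) : Prop := {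
  translation_wf : wf_foc phi';
  translation_sat : forall (M : structure ar) (a : var -> M),
    sat_foc a phi' = sat_fo a phi;
  translation_free : free_foc phi' =i free_fo phi;
  translation_width : (maxcw phi' <= l)%N;
  translation_noex : ~~ hasex phi';
  translation_depth : (br phi' <= n)%N
}.

Lemma translation_succ n l phi phi' :
  is_translation n l phi phi' -> is_translation n.+1 l phi phi'.
Proof. by case=> *; split=> //; apply: leqW. Qed.

Lemma translation_not n l phi phi' :
  is_translation n l phi phi' -> is_translation n l (FNot phi) (CNot phi').
Proof. by case=> wf sat *; split=> //= M a; rewrite sat. Qed.

Lemma translation_or n l phi psi phi' psi' :
  is_translation n l phi phi' -> is_translation n l psi psi' ->
  is_translation n l (FOr phi psi) (COr phi' psi').
Proof.
case=> wf sat fr w ne d [wf' sat' fr' w' ne' d']; split=> /=.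
- by rewrite wf wf'.
- by move=> M a; rewrite sat sat'.
- by move=> v; rewrite !mem_cat fr fr'.
- by rewrite geq_max w w'.
- by rewrite negb_or ne ne'.
- by rewrite geq_max d d'.
Qed.

Lemma sat_count_exs (M : structure ar) (a : var -> M) xs psi psi' :
  (forall b : var -> M, sat_foc b psi' = sat_fo b psi) ->
  sat_foc a (CPex (TCount (undup xs) psi')) = sat_fo a (exs xs psi).
Proof.
move=> sat_psi; set ys := undup xs; have ys_xs : ys =i xs := mem_undup xs.
have P_ext (b c : var -> M) : b =1 c -> sat_fo b psi -> sat_fo c psi.
  by move=> eq_bc; rewrite (eq_sat_fo _ eq_bc).
have updlP := @exists_updlP M ys _ a P_ext.
apply/idP/sat_exsP => /=.
  rewrite lez_nat => /card_gt0P[ms]; rewrite inE sat_psi => psi_ms.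
  have [|b ab psi_b] := proj1 updlP; first by exists ms; rewrite ?size_tuple.
  by exists b => //; apply: eq_agree_off ab.
case=> b ab psi_b; have [|ms /eqP size_ms psi_ms] := proj2 updlP.
  by exists b => //; apply: eq_agree_off ab => v; rewrite ys_xs.
by rewrite lez_nat; apply/card_gt0P; exists (Tuple size_ms); rewrite inE sat_psi.
Qed.

Lemma translation_exs n l xs psi psi' :
  xs != [::] -> (size xs <= l)%N -> is_translation n l psi psi' ->
  is_translation n.+1 l (exs xs psi) (CPex (TCount (undup xs) psi')).
Proof.
move=> xs_nil xs_l [wf sat fr w ne d]; split=> /=.
- rewrite undup_uniq wf !andbT lt0n size_eq0.
  by apply: contra xs_nil => /eqP/undup_nil->.
- by move=> M a; apply: sat_count_exs.
- by move=> v; rewrite mem_filter mem_free_exs mem_undup fr andbC.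
- by rewrite geq_max w (leq_trans (size_undup xs)).
- exact: ne.
- exact: d.
Qed.

Lemma qfree_translation l (phi : fo ar) :
  qfree phi -> exists phi', is_translation 0 l phi phi'.
Proof.
elim: phi => [x y|s vs|g IHg|g IHg h IHh|//] /=.
- by exists (CEq ar x y).
- by exists (@CRel Sym ar s vs).
- by case/IHg=> g' tr_g; exists (CNot g'); apply: translation_not.
case/andP=> /IHg[g' tr_g] /IHh[h' tr_h].
by exists (COr g' h'); apply: translation_or.
Qed.

Lemma BSigma_translation l n phi :
  BSigma l n phi -> exists phi', is_translation n l phi phi'.
Proof.
elim=> {n phi} [f /qfree_translation //|n xs psi xs_l _ [psi' tr_psi]|
                n f _ [f' tr_f]|n f g _ [f' tr_f] _ [g' tr_g]].
- have [->|xs_nil] := eqVneq xs [::].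
    by exists psi'; apply: translation_succ.
  by exists (CPex (TCount (undup xs) psi')); apply: translation_exs.
- by exists (CNot f'); apply: translation_not.
- by exists (COr f' g'); apply: translation_or.
Qed.

End Translation.

Theorem lemma5p5 (Sym : Type) (ar : Sym -> nat) (n l : nat) (phi : fo ar) :
  (1 <= l)%N -> BSigma l n phi ->
  exists phi' : foc ar,
    wf_foc phi' /\
    (forall (M : structure ar) (a : var -> M), sat_foc a phi' = sat_fo a phi) /\
    free_foc phi' =i free_fo phi /\
    (bw phi' <= l)%N /\ (br phi' <= n)%N.
Proof.
move=> _ /BSigma_translation[phi' [wf sat fr w ne d]].
exists phi'; do !split=> //.
exact: leq_trans (bw_le_maxcw ne) w.
Qed.
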